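(* Assume (R). Writing $F_n'$, $F_n''$ for derivatives with respect to $u$: $$nF_{n-1}(u)=\begin{cases}F_n'(u),& n\ge2\text{ even},\\ 2F_n(u)+(4u+1)F_n'(u),& n\ge1\text{ odd},\end{cases}$$ $$(n)_2F_{n-2}(u)=\begin{cases}2F_n'(u)+(4u+1)F_n''(u),& n\ge2\text{ even},\\ 6F_n'(u)+(4u+1)F_n''(u),& n\ge3\text{ odd}.\end{cases}$$ For the coefficients, for $0\le k\le d_{n-1}$: $$n\hat f_{n-1,k}=\begin{cases}\hat f_{n,k+1},& n\ge2\text{ even},\\ (4k+2)\hat f_{n,k}+\hat f_{n,k+1},& n\ge1\text{ odd},\end{cases}$$ and for $0\le k\le d_{n-2}$: $$(n)_2\hat f_{n-2,k}=\begin{cases}(4k+2)\hat f_{n,k+1}+\hat f_{n,k+2},& n\ge2\text{ even},\\ (4k+6)\hat f_{n,k+1}+\hat f_{n,k+2},& n\ge3\text{ odd}.\end{cases}$$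
   Context: Let $(\alpha_n)_{n\ge0}$ be an arbitrary sequence of complex numbers with Appell polynomials $A_n(x)=\sum_{\nu=0}^{n}\binom{n}{\nu}\alpha_{n-\nu}x^\nu$; property (R) means $A_n(1-x)=(-1)^nA_n(x)$ for all $n\ge0$. Let $d_n=\lfloor n/2\rfloor$, $\delta_n=1$ if $n$ odd, $0$ otherwise. Under (R), for each $n\ge0$ there is a unique polynomial $F_n(u)=\sum_{k\ge0}f_{n,k}u^k$ of degree at most $d_n$ with $A_n(x)=(2x-1)^{\delta_n}F_n(x(x-1))$ (explicitly $f_{n,k}=2^{2k-n}\sum_{\nu=0}^{d_n-k}\binom{n}{2\nu}\binom{d_n-\nu}{k}S_{2\nu}(1)$ for $k\le d_n$, where $S_m(1)=\sum_{\mu=0}^m\binom m\mu 2^\mu\alpha_\mu$), and $f_{n,k}=0$ for $k>d_n$. Set $\hat f_{n,k}=k!\,f_{n,k}$. $(n)_2=n(n-1)$. *)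

From HB Require Import structures.
From mathcomp Require Import all_boot all_order all_algebra.
From mathcomp Require Import reals complex.
Set Implicit Arguments.
Unset Strict Implicit.
Unset Printing Implicit Defensive.
Import Order.TTheory GRing.Theory Num.Theory.
Local Open Scope ring_scope.
Local Open Scope complex_scope.

Definition appell (R : realType) (alpha : nat -> R[i]) (n : nat) : {poly R[i]} :=
  \sum_(nu < n.+1) ('C(n, nu)%:R * alpha (n - nu)%N) *: 'X^nu.

Definition propR (R : realType) (alpha : nat -> R[i]) : Prop :=
  forall (n : nat) (x : R[i]), (appell alpha n).[1 - x] = (-1) ^+ n * (appell alpha n).[x].

Definition isFfamily (R : realType) (alpha : nat -> R[i]) (F : nat -> {poly R[i]}) : Prop :=
  forall n : nat, (size (F n) <= n./2 + 1)%N /\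
    appell alpha n = (2%:R *: 'X - 1) ^+ (odd n) * (F n \Po ('X * ('X - 1))).

Definition fhat (R : realType) (F : nat -> {poly R[i]}) (n k : nat) : R[i] :=
  (k`!)%:R * (F n)`_k.

From HB Require Import structures.
From mathcomp Require Import all_boot all_order all_algebra.
From mathcomp Require Import reals complex.
From mathcomp Require Import ring zify.
Set Implicit Arguments.
Unset Strict Implicit.
Unset Printing Implicit Defensive.
Import Order.TTheory GRing.Theory Num.Theory.
Local Open Scope ring_scope.

(* Write u = X(X-1) and v = 2X-1, so that u' = v and v^2 = 4u+1.  For a
   polynomial p and a natural number a put  lift a p = a p + (4X+1) p'.
   1. Appell polynomials satisfy A_n' = n A_{n-1}.
   2. Chain rule through u:  (p o u)' = (p' o u) v  and
      (v (p o u))' = (lift 2 p) o u;  moreover p |-> p o u is injective and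
      v is not a zero divisor.
   3. Comparing A_n' = n A_{n-1} with A_n = v^{delta_n} (F_n o u) gives the
      first-order identities  n F_{n-1} = F_n'  (n even) and
      n F_{n-1} = lift 2 F_n  (n odd).
   4. Applying them twice, using (lift a p)' = lift (a+4) p', gives the
      second-order identities  (n)_2 F_{n-2} = lift 2 F_n'  (n even) and
      (n)_2 F_{n-2} = lift 6 F_n'  (n odd).
   5. The coefficient identities are these polynomial identities read through
      the weighted coefficients  hatc p k = k! p_k, which turn derivation
      into a shift and lift a into  (4k+a) hatc p k + hatc p (k+1). *)

Lemma deriv_appell (R : realType) (alpha : nat -> R[i]) (n : nat) :
  (appell alpha n)^`() = n%:R *: appell alpha n.-1.
Proof.
have appellE m : appell alpha m = \poly_(i < m.+1) ('C(m, i)%:R * alpha (m - i)%N).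
  by rewrite poly_def.
rewrite !appellE; apply/polyP=> i.
rewrite coef_deriv coefZ !coef_poly.
case: n => [|n] /=; first by rewrite mul0r mul0rn.
rewrite ltnS; case: ltnP => [ltin|]; last by rewrite mul0rn mulr0.
have -> : (n.+1 - i.+1 = n - i)%N by lia.
rewrite mulrA -natrM (mul_bin_diag n.+1 i) natrM -[LHS]mulr_natl; ring.
Qed.

Section ShiftOperator.
Variable K : comNzRingType.
Implicit Types (p : {poly K}) (a k : nat).

Definition lift a p : {poly K} := a%:R *: p + (4%:R *: 'X + 1) * p^`().

Lemma liftZ a (c : K) p : lift a (c *: p) = c *: lift a p.
Proof. by rewrite /lift derivZ scalerDr !scalerA mulrC -scalerAr. Qed.

(* Differentiating lift a raises the weight by 4, since (4X+1)' = 4. *)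
Lemma deriv_lift a p : (lift a p)^`() = lift (a + 4) p^`().
Proof.
rewrite /lift derivD derivZ derivM derivD derivZ derivX -polyC1 derivC polyC1.
by rewrite !scaler_nat mulrnDr; ring.
Qed.

Definition hatc p k : K := k`!%:R * p`_k.

Lemma hatcZ (c : K) p k : hatc (c *: p) k = c * hatc p k.
Proof. by rewrite /hatc coefZ mulrCA. Qed.

Lemma hatc_deriv p k : hatc p^`() k = hatc p k.+1.
Proof. by rewrite /hatc coef_deriv factS natrM -mulr_natr; ring. Qed.

Lemma hatc_lift a p k :
  hatc (lift a p) k = (4 * k + a)%:R * hatc p k + hatc p k.+1.
Proof.
rewrite /lift -hatc_deriv /hatc coefD coefZ mulrDl mul1r coefD -scalerAl coefZ.
case: k => [|k]; first by rewrite coefXM eqxx mulr0 add0r fact0 coef_deriv; ring.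
rewrite coefXM !coef_deriv factS /=.
by move: p`_k.+1 p`_k.+2 => x y; ring.
Qed.

End ShiftOperator.

Section QuadraticSubstitution.
Variable K : numDomainType.
Local Notation u := ('X * ('X - 1) : {poly K}).
Local Notation v := (2%:R *: 'X - 1 : {poly K}).

(* u has degree 2, so composition with u is injective. *)
Lemma size_u : (1 < size u)%N.
Proof. by rewrite -polyC1 mulrC size_mulX ?size_XsubC // -size_poly_eq0 size_XsubC. Qed.

Lemma comp_u_inj : injective (fun p : {poly K} => p \Po u).
Proof.
move=> p q /= epq; apply/eqP; rewrite -subr_eq0 -(comp_poly_eq0 _ size_u).
by rewrite comp_polyB epq subrr.
Qed.

(* v can be cancelled; this uses 2 != 0. *)
Lemma v_neq0 : v != 0.
Proof.
apply/eqP=> /(congr1 (fun p : {poly K} => p`_1)).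
rewrite coefB coefZ coefX coef1 coef0 /= mulr1 subr0 => /eqP.
by rewrite pnatr_eq0.
Qed.

Lemma deriv_u : u^`() = v.
Proof. by rewrite derivM derivB derivX -polyC1 derivC polyC1 scaler_nat; ring. Qed.

Lemma v_sqr : v ^+ 2 = (4%:R *: 'X + 1) \Po u.
Proof. by rewrite comp_polyD comp_polyZ comp_polyX comp_polyC !scaler_nat; ring. Qed.

Lemma deriv_comp_u (p : {poly K}) : (p \Po u)^`() = (p^`() \Po u) * v.
Proof. by rewrite deriv_comp deriv_u. Qed.

(* Chain rule for an odd polynomial  (2x-1) p(x(x-1)), using v^2 = 4u+1. *)
Lemma deriv_v_comp_u (p : {poly K}) : (v * (p \Po u))^`() = lift 2 p \Po u.
Proof.
rewrite derivM deriv_comp_u derivB derivZ derivX -polyC1 derivC subr0 polyC1.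
rewrite /lift comp_polyD comp_polyM -v_sqr comp_polyZ.
by rewrite !scaler_nat; ring.
Qed.

End QuadraticSubstitution.

Section Recurrences.
Variables (R : realType) (alpha : nat -> R[i]) (F : nat -> {poly R[i]}).
Hypothesis HF : isFfamily alpha F.

(* n even: A_n = F_n(u) and A_{n-1} = v F_{n-1}(u); cancel v, then u. *)
Lemma F_even_rec (n : nat) : (2 <= n)%N -> ~~ odd n -> n%:R *: F n.-1 = (F n)^`().
Proof.
move=> n_ge2 n_even; have [_ An] := HF n; have [_ An1] := HF n.-1.
have odd_n1 : odd n.-1 by case: (n) n_even n_ge2 => //= m; rewrite negbK.
have := deriv_appell alpha n.
rewrite An An1 odd_n1 (negbTE n_even) expr0 mul1r expr1 deriv_comp_u => eAn.
apply/comp_u_inj/(mulIf (v_neq0 _)).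
by rewrite eAn comp_polyZ scalerAr mulrC.
Qed.

(* n odd: A_n = v F_n(u) and A_{n-1} = F_{n-1}(u); cancel u. *)
Lemma F_odd_rec (n : nat) : (1 <= n)%N -> odd n -> n%:R *: F n.-1 = lift 2 (F n).
Proof.
move=> n_ge1 n_odd; have [_ An] := HF n; have [_ An1] := HF n.-1.
have even_n1 : odd n.-1 = false by case: (n) n_odd n_ge1 => //= m /negPf.
have := deriv_appell alpha n.
rewrite An An1 even_n1 n_odd expr0 mul1r expr1 deriv_v_comp_u => eAn.
by apply: comp_u_inj; rewrite /= comp_polyZ eAn.
Qed.

(* n even: multiply the odd recurrence for n-1 by n, then use the even one. *)
Lemma F_even_rec2 (n : nat) : (2 <= n)%N -> ~~ odd n ->
  (n * n.-1)%:R *: F n.-2 = lift 2 (F n)^`().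
Proof.
move=> n_ge2 n_even.
have n1_odd : odd n.-1 by case: (n) n_even n_ge2 => //= m; rewrite negbK.
rewrite natrM -scalerA -[n.-2]/(n.-1.-1) F_odd_rec //; last by lia.
by rewrite -liftZ F_even_rec.
Qed.

(* n odd: differentiate the odd recurrence, via the even one for n-1. *)
Lemma F_odd_rec2 (n : nat) : (3 <= n)%N -> odd n ->
  (n * n.-1)%:R *: F n.-2 = lift 6 (F n)^`().
Proof.
move=> n_ge3 n_odd.
have n1_even : ~~ odd n.-1 by case: (n) n_odd n_ge3 => //= m /negPf ->.
rewrite natrM -scalerA -[n.-2]/(n.-1.-1) F_even_rec //; last by lia.
by rewrite -derivZ F_odd_rec ?deriv_lift //; lia.
Qed.

End Recurrences.

Theorem mainTheorem14 (R : realType) (alpha : nat -> R[i]) (F : nat -> {poly R[i]}) :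
  propR alpha -> isFfamily alpha F ->
  (* polynomial identities *)
  (forall n : nat, (2 <= n)%N -> ~~ odd n ->
     n%:R *: F n.-1 = (F n)^`()) /\
  (forall n : nat, (1 <= n)%N -> odd n ->
     n%:R *: F n.-1 = 2%:R *: F n + (4%:R *: 'X + 1) * (F n)^`()) /\
  (forall n : nat, (2 <= n)%N -> ~~ odd n ->
     (n * n.-1)%:R *: F n.-2 = 2%:R *: (F n)^`() + (4%:R *: 'X + 1) * (F n)^`(2)) /\
  (forall n : nat, (3 <= n)%N -> odd n ->
     (n * n.-1)%:R *: F n.-2 = 6%:R *: (F n)^`() + (4%:R *: 'X + 1) * (F n)^`(2)) /\
  (* coefficient identities *)
  (forall n k : nat, (2 <= n)%N -> ~~ odd n -> (k <= n.-1./2)%N ->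
     n%:R * fhat F n.-1 k = fhat F n k.+1) /\
  (forall n k : nat, (1 <= n)%N -> odd n -> (k <= n.-1./2)%N ->
     n%:R * fhat F n.-1 k = (4 * k + 2)%:R * fhat F n k + fhat F n k.+1) /\
  (forall n k : nat, (2 <= n)%N -> ~~ odd n -> (k <= n.-2./2)%N ->
     (n * n.-1)%:R * fhat F n.-2 k = (4 * k + 2)%:R * fhat F n k.+1 + fhat F n k.+2) /\
  (forall n k : nat, (3 <= n)%N -> odd n -> (k <= n.-2./2)%N ->
     (n * n.-1)%:R * fhat F n.-2 k = (4 * k + 6)%:R * fhat F n k.+1 + fhat F n k.+2).
Proof.
move=> _ HF.
have fhatE n k : fhat F n k = hatc (F n) k by [].
have coef_eq (c : R[i]) p q k : c *: p = q -> c * hatc p k = hatc q k.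
  by move=> <-; rewrite hatcZ.
split; first exact: F_even_rec.
split; first exact: F_odd_rec.
split; first exact: F_even_rec2.
split; first exact: F_odd_rec2.
split=> [n k nge par _|].
  by rewrite !fhatE (coef_eq _ _ _ _ (F_even_rec HF nge par)) hatc_deriv.
split=> [n k nge par _|].
  by rewrite !fhatE (coef_eq _ _ _ _ (F_odd_rec HF nge par)) hatc_lift.
split=> n k nge par _; rewrite !fhatE.
- by rewrite (coef_eq _ _ _ _ (F_even_rec2 HF nge par)) hatc_lift !hatc_deriv.
- by rewrite (coef_eq _ _ _ _ (F_odd_rec2 HF nge par)) hatc_lift !hatc_deriv.
Qed.
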